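(* Let $\{\mathrm{BP}(t): t\ge 0\}$ be the genealogical tree process of the two-type population dependent branching process with parameters $p\in(0,1]$, $q\in[0,1]$ (described in the context), and for $n\ge 2$ let $T_n=\inf\{t\ge 0: n_A(t)+n_B(t)=n\}$. Then $\mathrm{BP}(T_n)\stackrel{d}{=}\mathcal{T}_n$ for each $n\ge 2$, where $\{\mathcal{T}_n\}_{n\ge 2}$ is the two-type Community Modulated Recursive Tree with parameters $p,q$. In fact $\{\mathrm{BP}(T_n)\}_{n\ge 2}\stackrel{d}{=}\{\mathcal{T}_n\}_{n\ge 2}$ as processes.
   Context: Two-type Community Modulated Recursive Tree (CMRT) with parameters $p\in(0,1]$, $q\in[0,1]$: $\mathcal{T}_2$ consists of vertex $1$ of type $A$ and vertex $2$ of type $B$ joined by an edge (the roots of type $A$ and $B$). For $n\ge 3$, $\mathcal{T}_n$ is obtained from $\mathcal{T}_{n-1}$ by adding vertex $n$: (1) vertex $n$ is of type $A$ with probability $p$ and of type $B$ with probability $1-p$; (2) with probability $q$ it decides to connect to a vertex of its own type, and with probability $1-q$ to a vertex of the other type; (3) it connects by an edge to an existing vertex of the selected type chosen uniformly at random. All random choices are independent. Population dependent branching process: a continuous-time process started at time $0$ with two individuals (ancestors), one of type $A$ and one of type $B$; individuals live forever. Let $n_A(t), n_B(t)$ be the numbers of type $A$, $B$ individuals at time $t$ ($n_A(0)=n_B(0)=1$). At time $t$, each type $A$ individual gives birth to type $A$ individuals at rate $q$ and to type $B$ individuals at rate $(1-p)(1-q)/p$; each type $B$ individual gives birth to type $A$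 individuals at rate $\frac{n_A(t)}{n_B(t)}(1-q)$ and to type $B$ individuals at rate $\frac{n_A(t)}{n_B(t)}\cdot\frac{q(1-p)}{p}$ (waiting times between births are exponential with these rates given the current state). $\mathrm{BP}(t)$ is the recursive tree recording the genealogy up to and including time $t$: the type $A$ and type $B$ ancestors are labeled $1$ and $2$ and joined by an edge, every other individual is a vertex labeled by its overall birth order and joined by an edge to its parent. *)

From HB Require Import structures.
From mathcomp Require Import all_boot all_order all_algebra.
From mathcomp Require Import all_classical all_reals all_analysis.
Set Implicit Arguments. Unset Strict Implicit. Unset Printing Implicit Defensive.
Import Order.TTheory GRing.Theory Num.Theory.
Local Open Scope ring_scope.

(** A (two-type, labeled, rooted recursive) tree on vertices 1..n is encoded as
    a sequence of length n: entry i (0-based, i.e. vertex i+1) is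
    (type, parent) with type = true for A, false for B, and parent the 0-based
    index of the vertex it is attached to.  The two roots are
    vertex 1 (type A) and vertex 2 (type B, attached to vertex 1, which encodes
    the edge between the roots); the parent field of vertex 1 is irrelevant
    and fixed to 0. *)
Definition vstate := seq (bool * nat).

Definition init_state : vstate := [:: (true, 0%N); (false, 0%N)].

Definition nA (x : vstate) : nat := count (fun e => e.1) x.
Definition nB (x : vstate) : nat := count (fun e => ~~ e.1) x.

Definition vtype (x : vstate) (v : nat) : bool := (nth (true, 0%N) x v).1.

Definition step_of (x y : vstate) : bool :=
  [&& size y == (size x).+1, take (size x) y == x &
      ((last (true, 0%N) y).2 < size x)%N].

Definition birth_rate (R : realType) (p q : R) (x : vstate) (c : bool) (v : nat) : R :=
  if vtype x v then (if c then q else (1 - p) * (1 - q) / p)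
  else (nA x)%:R / (nB x)%:R * (if c then 1 - q else q * (1 - p) / p).

Definition total_rate (R : realType) (p q : R) (x : vstate) : R :=
  \sum_(v < size x) \sum_(c : bool) birth_rate p q x c v.

Definition bp_rate (R : realType) (p q : R) (x y : vstate) : R :=
  if step_of x y then birth_rate p q x (last (true, 0%N) y).1 (last (true, 0%N) y).2
  else 0.

Definition bp_jump_prob (R : realType) (p q : R) (x y : vstate) : R :=
  bp_rate p q x y / total_rate p q x.

(** jump times: J_k = S_0 + ... + S_{k-1}, S_k = holding time in the k-th state *)
Definition jump_time (R : realType) (T : Type) (S : nat -> T -> R) (k : nat) (w : T) : R :=
  \sum_(i < k) S i w.

(** CMRT transition probability from T_{n-1} = x to T_n = y: the new vertex
    has type c (prob p or 1-p), chooses the type of v (same type with prob q,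
    other type with prob 1-q), and v uniformly among vertices of that type. *)
Definition cmrt_step (R : realType) (p q : R) (x y : vstate) : R :=
  if step_of x y then
    let c := (last (true, 0%N) y).1 in
    let v := (last (true, 0%N) y).2 in
    (if c then p else 1 - p) * (if vtype x v == c then q else 1 - q)
      / (count (fun e => e.1 == vtype x v) x)%:R
  else 0.

From HB Require Import structures.
From mathcomp Require Import all_boot all_order all_algebra.
From mathcomp Require Import all_classical all_reals all_analysis.
From mathcomp Require Import ring lra zify.
Import Order.TTheory GRing.Theory Num.Theory.
Local Open Scope classical_set_scope.
Local Open Scope ring_scope.

(* In every state containing vertices of both types the total birth rate of
   the branching process is n_A / p, and dividing the individual rates by it
   gives exactly the CMRT transition probabilities.  Holding times are
   positive, so BP(T_n) is the (n-2)-th state of the jump chain, and the path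
   laws of (BP(T_k))_k and (T_k)_k coincide.  The one-dimensional marginals then
   agree because the BP marginal is dominated by the CMRT one and both are
   probability distributions on the same finite set of trees. *)

Lemma sum_vtype (R : nmodType) (x : vstate) (a b : R) :
  \sum_(v < size x) (if vtype x v then a else b) = a *+ nA x + b *+ nB x.
Proof.
rewrite -(big_mkord xpredT (fun v => if vtype x v then a else b)) /vtype.
rewrite -(big_nth (true, 0%N) xpredT (fun e : bool * nat => if e.1 then a else b)).
elim: x => [|[[] v] x IH]; rewrite ?big_nil ?addr0 // big_cons IH /nA /nB /=.
  by rewrite mulrS addrA.
by rewrite mulrS addrCA.
Qed.

Definition has_both_types (x : vstate) := (0 < nA x)%N && (0 < nB x)%N.

Lemma total_rateE (R : realType) (p q : R) (x : vstate) :
  p != 0 -> has_both_types x -> total_rate p q x = (nA x)%:R / p.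
Proof.
move=> p0 /andP[nA_gt0 nB_gt0].
have nB_neq0 : (nB x)%:R != 0 :> R by rewrite pnatr_eq0 -lt0n.
rewrite /total_rate (eq_bigr (fun v : 'I_(size x) => if vtype x v
    then q + (1 - p) * (1 - q) / p
    else (nA x)%:R / (nB x)%:R * (1 - q + q * (1 - p) / p))); last first.
  by move=> v _; rewrite big_bool /birth_rate; case: (vtype x v) => //=; ring.
rewrite sum_vtype -(mulr_natr _ (nA x)) -(mulr_natr _ (nB x)); field.
by rewrite p0 nB_neq0.
Qed.

Lemma step_of_rcons (x y : vstate) : step_of x y -> y = rcons x (last (true, 0%N) y).
Proof.
case/and3P => /eqP size_y /eqP take_y _.
case/lastP: y size_y take_y => [//|s e]; rewrite size_rcons => -[<-].
by rewrite -cats1 take_size_cat // last_cat cats1 => <-.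
Qed.

Lemma has_both_types_step (x y : vstate) :
  step_of x y -> has_both_types x -> has_both_types y.
Proof.
move=> /step_of_rcons -> /andP[nA_gt0 nB_gt0].
rewrite /has_both_types /nA /nB -cats1 !count_cat.
by apply/andP; split; apply: leq_trans (leq_addr _ _).
Qed.

Lemma bp_jump_probE (R : realType) (p q : R) (x y : vstate) :
  p != 0 -> has_both_types x -> bp_jump_prob p q x y = cmrt_step p q x y.
Proof.
move=> p0 both; rewrite /bp_jump_prob /bp_rate /cmrt_step total_rateE //.
case: (step_of x y); last by rewrite mul0r.
case/andP: both => nA_gt0 nB_gt0.
have nA_neq0 : (nA x)%:R != 0 :> R by rewrite pnatr_eq0 -lt0n.
have nB_neq0 : (nB x)%:R != 0 :> R by rewrite pnatr_eq0 -lt0n.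
have countA : count (fun e : bool * nat => e.1 == true) x = nA x.
  by apply: eq_count => e; rewrite eqb_id.
have countB : count (fun e : bool * nat => e.1 == false) x = nB x.
  by apply: eq_count => e; rewrite eqbF_neg.
rewrite /birth_rate.
by case: (vtype x _); case: (last _ y).1; rewrite /= ?countA ?countB; field;
  rewrite ?nA_neq0 ?nB_neq0 ?p0.
Qed.

Lemma has_both_types_cmrt_path (R : realType) (p q : R) (xs : nat -> vstate) m :
  xs 0%N = init_state -> \prod_(i < m) cmrt_step p q (xs i) (xs i.+1) != 0 ->
  has_both_types (xs m).
Proof.
move=> xs0; elim: m => [|m IH]; first by rewrite xs0.
rewrite big_ord_recr mulf_eq0 negb_or => /andP[/IH both].
rewrite /cmrt_step; case: ifP => [step _|_]; last by rewrite eqxx.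
exact: has_both_types_step step both.
Qed.

Lemma prod_bp_jump_probE (R : realType) (p q : R) (xs : nat -> vstate) m : p != 0 ->
  (xs 0%N == init_state)%:R * \prod_(i < m) bp_jump_prob p q (xs i) (xs i.+1)
  = (xs 0%N == init_state)%:R * \prod_(i < m) cmrt_step p q (xs i) (xs i.+1).
Proof.
move=> p0; case: eqP => [xs0|_]; last by rewrite !mul0r.
congr (_ * _); elim: m => [|m IH]; first by rewrite !big_ord0.
rewrite !big_ord_recr /= IH.
have [->|nz] := eqVneq (\prod_(i < m) cmrt_step p q (xs i) (xs i.+1)) 0.
  by rewrite !mul0r.
by rewrite bp_jump_probE // (@has_both_types_cmrt_path _ p q _ _ xs0 nz).
Qed.

Lemma partial_sums_bracket (R : realDomainType) (S : nat -> R) m t :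
  0 <= t < \sum_(i < m) S i ->
  exists2 k, (k < m)%N & \sum_(i < k) S i <= t < \sum_(i < k.+1) S i.
Proof.
elim: m => [|m IH]; first by rewrite big_ord0; lra.
case/andP => t_ge0 t_lt; case: (ltP t (\sum_(i < m) S i)) => [lt_t|le_t].
  by case: IH => [|k km hk]; [rewrite t_ge0 | exists k => //; apply: ltnW].
by exists m; rewrite ?le_t.
Qed.

Section HittingTime.
Context {R : realType} {S : nat -> R} {B : R -> vstate} {y : nat -> vstate}.
Hypothesis S_gt0 : forall k, 0 < S k.
Hypothesis size_y : forall k, size (y k) = k.+2.
Hypothesis B_jump : forall k t, \sum_(i < k) S i <= t < \sum_(i < k.+1) S i -> B t = y k.

Lemma state_at_jump_time k : B (\sum_(i < k) S i) = y k.
Proof. by apply: B_jump; rewrite lexx big_ord_recr /= ltrDl. Qed.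

Lemma hitting_timeE n : (2 <= n)%N ->
  inf [set t | 0 <= t /\ size (B t) = n] = \sum_(i < n - 2) S i.
Proof.
move=> n_ge2.
have sum_ge0 k : 0 <= \sum_(i < k) S i by apply: sumr_ge0 => i _; apply: ltW.
have hit : [set t | 0 <= t /\ size (B t) = n] (\sum_(i < n - 2) S i).
  by rewrite /= state_at_jump_time size_y sum_ge0; split => //; lia.
have lb : lbound [set t | 0 <= t /\ size (B t) = n] (\sum_(i < n - 2) S i).
  move=> t [t_ge0 size_t]; rewrite leNgt; apply/negP => t_lt.
  have [|k k_lt /B_jump Bt] := @partial_sums_bracket R S (n - 2) t; first by rewrite t_ge0.
  by move: size_t; rewrite Bt size_y; lia.
apply/eqP; rewrite eq_le ge_inf ?lb_le_inf //; first by exists (\sum_(i < n - 2) S i).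
by exists (\sum_(i < n - 2) S i).
Qed.

Lemma hitting_state n : (2 <= n)%N ->
  B (inf [set t | 0 <= t /\ size (B t) = n]) = y (n - 2).
Proof. by move=> n_ge2; rewrite hitting_timeE // state_at_jump_time. Qed.

End HittingTime.

Fixpoint bounded_vstates (n m : nat) : seq vstate :=
  if n is n'.+1 then
    [seq e :: s | e <- [seq (b, v) | b <- [:: true; false], v <- iota 0 m],
                  s <- bounded_vstates n' m]
  else [:: [::]].

Lemma mem_bounded_vstates (s : vstate) m :
  all (fun e : bool * nat => (e.2 < m)%N) s -> s \in bounded_vstates (size s) m.
Proof.
elim: s => [//|[b v] s IH] /andP[v_lt s_lt].
apply: (allpairs_f (fun e s => e :: s)); last exact: IH.
by apply: (allpairs_f pair); [case: (b) | rewrite mem_iota].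
Qed.

Section JumpChain.
Context {y : nat -> vstate}.
Hypothesis y0 : y 0%N = init_state.
Hypothesis y_step : forall k, exists c v, (v < size (y k))%N /\ y k.+1 = rcons (y k) (c, v).

Lemma size_jump_chain k : size (y k) = k.+2.
Proof.
elim: k => [|k IH]; first by rewrite y0.
by have [c [v [_ ->]]] := y_step k; rewrite size_rcons IH.
Qed.

Lemma jump_chain_prefix i k : (i <= k)%N -> y i = take i.+2 (y k).
Proof.
elim: k => [|k IH]; first by rewrite leqn0 => /eqP ->; rewrite take_oversize ?size_jump_chain.
rewrite leq_eqVlt => /orP[/eqP ->|i_lt]; first by rewrite take_oversize ?size_jump_chain.
have [c [v [_ ->]]] := y_step k.
by rewrite -cats1 takel_cat ?size_jump_chain // IH.
Qed.

Lemma jump_chain_bounded k : y k \in bounded_vstates k.+2 k.+2.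
Proof.
rewrite -{1}(size_jump_chain k); apply: mem_bounded_vstates.
elim: k => [|k IH]; first by rewrite y0.
have [c [v [v_lt ->]]] := y_step k; rewrite all_rcons /= (leq_trans v_lt) ?size_jump_chain //.
by apply: sub_all IH => e /= /ltnW.
Qed.

End JumpChain.

Definition hitting_time {R : realType} {T : Type} (B : R -> T -> vstate) (n : nat) (w : T)
    : R :=
  inf [set t | 0 <= t /\ size (B t w) = n].

Section BranchingProcess.
Context {R : realType} {p q : R} {d : measure_display} {Omega : measurableType d}.
Context {P : probability Omega R} {Y : nat -> Omega -> vstate}.
Context {Hold : nat -> Omega -> R} {BP : R -> Omega -> vstate}.
Hypothesis p_neq0 : p != 0.
Hypothesis Y0 : forall w, Y 0%N w = init_state.
Hypothesis Y_step :
  forall k w, exists c v, (v < size (Y k w))%N /\ Y k.+1 w = rcons (Y k w) (c, v).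
Hypothesis Hold_gt0 : forall k w, 0 < Hold k w.
Hypothesis jump_chain_law :
  forall (k : nat) (ys : nat -> vstate) (ss : nat -> R), (forall i, 0 <= ss i) ->
  P [set w | (forall i, (i <= k)%N -> Y i w = ys i) /\
             (forall i, (i < k)%N -> ss i < Hold i w)]
  = ((ys 0%N == init_state)%:R *
     \prod_(i < k) (bp_jump_prob p q (ys i) (ys i.+1)
                     * expR (- total_rate p q (ys i) * ss i)))%:E.
Hypothesis BP_jump :
  forall w k t, jump_time Hold k w <= t < jump_time Hold k.+1 w -> BP t w = Y k w.

Lemma bp_hitting_state n w : (2 <= n)%N -> BP (hitting_time BP n w) w = Y (n - 2) w.
Proof.
exact: (hitting_state (Hold_gt0^~ w) (size_jump_chain (Y0 w) (Y_step^~ w)) (BP_jump w)).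
Qed.

Lemma bp_path_prob n (xs : nat -> vstate) : (2 <= n)%N ->
  P [set w | forall k, (2 <= k <= n)%N -> BP (hitting_time BP k w) w = xs k]
  = ((xs 2%N == init_state)%:R *
     \prod_(3 <= k < n.+1) cmrt_step p q (xs k.-1) (xs k))%:E.
Proof.
move=> n_ge2.
have -> : [set w | forall k, (2 <= k <= n)%N -> BP (hitting_time BP k w) w = xs k]
    = [set w | (forall i, (i <= n - 2)%N -> Y i w = xs i.+2) /\
               (forall i, (i < n - 2)%N -> (0 : R) < Hold i w)].
  apply/seteqP; split => w /=.
    move=> path; split=> [i i_le|i _]; last exact: Hold_gt0.
    by have := path i.+2; rewrite bp_hitting_state // !subSS subn0; apply; lia.
  case=> path _ k k_range; rewrite bp_hitting_state; last by lia.
  by have := path (k - 2)%N; rewrite (_ : (k - 2).+2 = k); [apply; lia | lia].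
move: (jump_chain_law (n - 2) (fun i => xs i.+2) (fun=> 0) (fun=> lexx 0)) => /= ->.
congr _%:E.
(* With zero time thresholds the holding-time constraints are vacuous and every
   exponential factor is 1. *)
under eq_bigr do rewrite mulr0 expR0 mulr1.
rewrite (prod_bp_jump_probE _ _ _ (fun i => xs i.+2)) //; congr (_ * _).
rewrite (big_addn 0 n.+1 3) big_mkord (_ : n.+1 - 3 = n - 2)%N; last by lia.
by apply: eq_bigr => i _; rewrite addn3.
Qed.

End BranchingProcess.

Lemma eq_in_of_le_sum {R : realDomainType} {V : eqType} {s : seq V} {a b : V -> R} :
  uniq s -> {in s, forall v, a v <= b v} -> \sum_(v <- s) b v <= \sum_(v <- s) a v ->
  {in s, a =1 b}.
Proof.
move=> s_uniq a_le_b sum_le v v_in.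
have sum_le0 : \sum_(u <- s) (b u - a u) <= 0 by rewrite sumrB subr_le0.
have rest_ge0 : 0 <= \sum_(u <- s | u != v) (b u - a u).
  by rewrite big_seq_cond sumr_ge0 // => u /andP[u_in _]; rewrite subr_ge0 a_le_b.
move: sum_le0; rewrite (bigD1_seq v) //= => sum_le0.
by have := a_le_b v v_in; lra.
Qed.

Lemma measure_preimage_mem_seq {d} {T : measurableType d} {R : realType}
    (mu : {measure set T -> \bar R}) {V : eqType} {f : T -> V} {s : seq V} :
  uniq s -> (forall v, measurable (f @^-1` [set v])) ->
  measurable [set w | f w \in s] /\
  mu [set w | f w \in s] = (\sum_(v <- s) mu (f @^-1` [set v]))%E.
Proof.
move=> + f_meas; elim: s => [_|v s IH /andP[v_notin s_uniq]].
  rewrite big_nil (_ : [set w | f w \in [::]] = set0) ?measure0 //.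
  by apply/seteqP; split => w.
have [s_meas s_mu] := IH s_uniq.
have -> : [set w | f w \in v :: s] = f @^-1` [set v] `|` [set w | f w \in s].
  apply/seteqP; split => w /=; rewrite in_cons.
    by case/orP => [/eqP|]; [left | right].
  by case=> ->; rewrite ?eqxx ?orbT.
split; first exact: measurableU.
rewrite measureU ?big_cons -?s_mu //.
by apply/seteqP; split => w // [/= fw]; rewrite /= fw (negbTE v_notin).
Qed.

Section Marginals.
Context {R : realType} {d d' : measure_display} {T : measurableType d} {T' : measurableType d'}.
Variables (P : probability T R) (P' : probability T' R).

Lemma le_marginal_of_path_law {V : eqType} (X : nat -> T -> seq V) (X' : nat -> T' -> seq V)
    (m n : nat) :
  (m <= n)%N -> (forall k v, measurable (X' k @^-1` [set v])) ->
  (forall xs, P [set w | forall k, (m <= k <= n)%N -> X k w = xs k]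
            = P' [set w | forall k, (m <= k <= n)%N -> X' k w = xs k]) ->
  (forall k w, (m <= k <= n)%N -> X k w = take k (X n w)) ->
  forall v, (P (X n @^-1` [set v]) <= P' (X' n @^-1` [set v]))%E.
Proof.
move=> mn X'_meas path_law prefix v.
have [v_eq|v_neq] := eqVneq (take n v) v; last first.
  rewrite (_ : X n @^-1` _ = set0) ?measure0 ?measure_ge0 //.
  apply/seteqP; split => w //= Xw.
  by move: v_neq; rewrite -Xw -prefix ?eqxx // mn leqnn.
have -> : X n @^-1` [set v] = [set w | forall k, (m <= k <= n)%N -> X k w = take k v].
  apply/seteqP; split => w /= => [Xw k k_range | path]; first by rewrite prefix // Xw.
  by rewrite -v_eq -path // mn leqnn.
rewrite path_law; apply: le_measure; rewrite ?inE //.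
- exact: (bigcap_measurableType (fun k _ => X'_meas k (take k v))).
- by move=> w path; rewrite /= -v_eq path // mn leqnn.
Qed.

Lemma eq_marginal_of_le {V : eqType} {X : T -> V} {X' : T' -> V} (s : seq V) :
  uniq s -> (forall v, measurable (X @^-1` [set v])) ->
  (forall v, measurable (X' @^-1` [set v])) -> (forall w, X w \in s) ->
  (forall v, P (X @^-1` [set v]) <= P' (X' @^-1` [set v]))%E ->
  {in s, forall v, P (X @^-1` [set v]) = P' (X' @^-1` [set v])}.
Proof.
move=> s_uniq X_meas X'_meas X_in le_v.
pose a v := fine (P (X @^-1` [set v])); pose b v := fine (P' (X' @^-1` [set v])).
have aE v : P (X @^-1` [set v]) = (a v)%:E by rewrite fineK ?fin_num_measure.
have bE v : P' (X' @^-1` [set v]) = (b v)%:E by rewrite fineK ?fin_num_measure.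
move=> v v_in; rewrite aE bE; congr _%:E; move: v v_in.
apply: eq_in_of_le_sum => // [v _|]; first by rewrite -lee_fin -aE -bE.
have [s_meas s_P] := measure_preimage_mem_seq P s_uniq X_meas.
have [s'_meas s_P'] := measure_preimage_mem_seq P' s_uniq X'_meas.
rewrite -lee_fin -!sumEFin -(eq_bigr _ (fun v _ => aE v)) -(eq_bigr _ (fun v _ => bE v)).
rewrite -s_P -s_P' (_ : [set w | X w \in s] = setT); last first.
  by apply/seteqP; split => w // _; exact: X_in.
apply: le_trans (probability_le1 P' s'_meas) _.
by rewrite -(probability_setT P).
Qed.

End Marginals.

Theorem lemma2p1 (R : realType) (p q : R) (hp : 0 < p <= 1) (hq : 0 <= q <= 1)
  (d : measure_display) (Omega : measurableType d) (P : probability Omega R)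
  (Y : nat -> Omega -> vstate) (Hold : nat -> Omega -> R) (BP : R -> Omega -> vstate)
  (hYm : forall k y, measurable (Y k @^-1` [set y]))
  (hSm : forall k, measurable_fun setT (Hold k))
  (hY0 : forall w, Y 0%N w = init_state)
  (hYstep : forall k w, exists c v, (v < size (Y k w))%N /\ Y k.+1 w = rcons (Y k w) (c, v))
  (hSpos : forall k w, 0 < Hold k w)
  (hlaw : forall (k : nat) (ys : nat -> vstate) (ss : nat -> R), (forall i, 0 <= ss i) ->
     P [set w | (forall i, (i <= k)%N -> Y i w = ys i) /\
                (forall i, (i < k)%N -> ss i < Hold i w)]
     = ((ys 0%N == init_state)%:R *
        \prod_(i < k) (bp_jump_prob p q (ys i) (ys i.+1)
                        * expR (- total_rate p q (ys i) * ss i)))%:E)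
  (hBP : forall w k t, jump_time Hold k w <= t < jump_time Hold k.+1 w -> BP t w = Y k w)
  (d' : measure_display) (Omega' : measurableType d') (P' : probability Omega' R)
  (Tr : nat -> Omega' -> vstate)
  (hTrm : forall k x, measurable (Tr k @^-1` [set x]))
  (hTr : forall (n : nat) (xs : nat -> vstate), (2 <= n)%N ->
     P' [set w | forall k, (2 <= k <= n)%N -> Tr k w = xs k]
     = ((xs 2%N == init_state)%:R *
        \prod_(3 <= k < n.+1) cmrt_step p q (xs k.-1) (xs k))%:E) :
  let Tn (n : nat) (w : Omega) := inf [set t | 0 <= t /\ size (BP t w) = n] in
  (forall (n : nat) (x : vstate), (2 <= n)%N ->
     P [set w | BP (Tn n w) w = x] = P' [set w | Tr n w = x]) /\
  (forall (n : nat) (xs : nat -> vstate), (2 <= n)%N ->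
     P [set w | forall k, (2 <= k <= n)%N -> BP (Tn k w) w = xs k]
     = P' [set w | forall k, (2 <= k <= n)%N -> Tr k w = xs k]).
Proof.
move=> Tn.
have p_neq0 : p != 0 by case/andP: hp => p_gt0 _; rewrite gt_eqF.
have hitE n w : (2 <= n)%N -> BP (Tn n w) w = Y (n - 2)%N w.
  exact: (bp_hitting_state hY0 hYstep hSpos hBP).
have path_law n xs : (2 <= n)%N ->
    P [set w | forall k, (2 <= k <= n)%N -> BP (Tn k w) w = xs k]
    = P' [set w | forall k, (2 <= k <= n)%N -> Tr k w = xs k].
  by move=> n_ge2; rewrite (bp_path_prob p_neq0 hY0 hYstep hSpos hlaw) // hTr.
split=> // n x n_ge2.
have n_eq : ((n - 2).+2 = n)%N by lia.
have XE v : [set w | BP (Tn n w) w = v] = Y (n - 2)%N @^-1` [set v].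
  by apply/seteqP; split => w /=; rewrite hitE.
rewrite XE; apply: (eq_marginal_of_le P P' (undup (x :: bounded_vstates n n))).
- exact: undup_uniq.
- exact: hYm.
- exact: hTrm.
- move=> w; move: (jump_chain_bounded (hY0 w) (hYstep^~ w) (n - 2)).
  by rewrite n_eq mem_undup in_cons => ->; rewrite orbT.
- move=> v; rewrite -XE.
  apply: (le_marginal_of_path_law P P' (fun k w => BP (Tn k w) w) Tr 2 n) => //.
  - by move=> xs; exact: path_law.
  move=> k w k_range; rewrite !hitE; try lia.
  by rewrite (jump_chain_prefix (hY0 w) (hYstep^~ w) (k - 2) (n - 2)); [congr take | ]; lia.
- by rewrite mem_undup mem_head.
Qed.
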